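(* Let $\mathsf{M}_{\rho_0}[\boldsymbol{\alpha}]\triangleq\mathbb{E}_{\rho_0(\mathbf{x})}[\boldsymbol{\alpha}(\mathbf{x})\boldsymbol{\alpha}(\mathbf{x})^\intercal]$ and $\mathsf{M}_{\rho_1}[\boldsymbol{\beta}]\triangleq\mathbb{E}_{\rho_1(\mathbf{x}')}[\boldsymbol{\beta}(\mathbf{x}')\boldsymbol{\beta}(\mathbf{x}')^\intercal]$ (assumed invertible), and define $\mathsf{S}^{\mathsf{sqrt}}_{\rho_0,\rho_1}[\boldsymbol{\alpha},\boldsymbol{\beta}]\triangleq (\mathsf{M}_{\rho_0}[\boldsymbol{\alpha}])^{1/2}(\mathsf{M}_{\rho_1}[\boldsymbol{\beta}])^{1/2}$. Then this matrix shares the same spectrum as the kernel $k$: there exist matrices $\mathsf{U},\mathsf{V}$ with orthonormal columns and $\Sigma=\mathsf{diag}(\sigma_1,\ldots,\sigma_r)$ such that $\mathsf{S}^{\mathsf{sqrt}}_{\rho_0,\rho_1}[\boldsymbol{\alpha},\boldsymbol{\beta}]=\mathsf{U}\Sigma\mathsf{V}^\intercal=\sum_{i=1}^r\sigma_i\mathbf{u}_i\mathbf{v}_i^\intercal$, where $\sigma_i$ are the singular values in the SVD $k(\mathbf{x},\mathbf{x}')=\sum_{i=1}^r\sigma_i\phi_i(\mathbf{x})\psi_i(\mathbf{x}')$. Moreover, the ordered, normalized singular functions of $k$ are given by $\boldsymbol{\phi}(\mathbf{x})=\mathsf{U}^\intercal(\mathsf{M}_{\rho_0}[\boldsymbol{\alpha}])^{-1/2}\boldsymbol{\alpha}(\mathbf{x})$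 and $\boldsymbol{\psi}(\mathbf{x}')=\mathsf{V}^\intercal(\mathsf{M}_{\rho_1}[\boldsymbol{\beta}])^{-1/2}\boldsymbol{\beta}(\mathbf{x}')$; i.e., $\mathbb{E}_{\rho_0}[\boldsymbol{\phi}\boldsymbol{\phi}^\intercal]=\mathbb{E}_{\rho_1}[\boldsymbol{\psi}\boldsymbol{\psi}^\intercal]=\mathsf{I}$, $k(\mathbf{x},\mathbf{x}')=\boldsymbol{\phi}(\mathbf{x})^\intercal\Sigma\boldsymbol{\psi}(\mathbf{x}')$, $(\mathcal{K}^*\phi_i)=\sigma_i\psi_i$ and $(\mathcal{K}\psi_i)=\sigma_i\phi_i$.
   Context: Let $\mathcal{X}\subseteq\mathbb{R}^d$, let $p(\mathbf{x}'|\mathbf{x})$ be the transition density of a time-homogeneous Markov process, and let $\rho_0,\rho_1$ be the distributions of the current and future states. The Koopman operator $\mathcal{K}\colon L^2_{\rho_1}(\mathcal{X})\to L^2_{\rho_0}(\mathcal{X})$ is the integral operator $(\mathcal{K}g)(\mathbf{x})=\int k(\mathbf{x},\mathbf{x}')g(\mathbf{x}')\rho_1(\mathbf{x}')d\mathbf{x}'=\mathbb{E}_{p(\mathbf{x}'|\mathbf{x})}[g(\mathbf{x}')]$ with kernel $k(\mathbf{x},\mathbf{x}')\triangleq p(\mathbf{x}'|\mathbf{x})/\rho_1(\mathbf{x}')$; its adjoint is $(\mathcal{K}^*f)(\mathbf{x}')=\int k(\mathbf{x},\mathbf{x}')f(\mathbf{x})\rho_0(\mathbf{x})d\mathbf{x}$.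 Assume the operator has finite rank with factorized kernel $k(\mathbf{x},\mathbf{x}')=\boldsymbol{\alpha}(\mathbf{x})^\intercal\boldsymbol{\beta}(\mathbf{x}')=\sum_{i=1}^r\alpha_i(\mathbf{x})\beta_i(\mathbf{x}')$, and SVD $k(\mathbf{x},\mathbf{x}')=\sum_{i=1}^r\sigma_i\phi_i(\mathbf{x})\psi_i(\mathbf{x}')$ with $\langle\phi_i,\phi_j\rangle_{\rho_0}=\langle\psi_i,\psi_j\rangle_{\rho_1}=\delta_{ij}$ and $1=\sigma_1\ge\sigma_2\ge\cdots\ge\sigma_r\ge0$. *)

From HB Require Import structures.
From mathcomp Require Import all_boot all_order all_algebra.
From mathcomp Require Import all_classical all_reals all_analysis.
Set Implicit Arguments. Unset Strict Implicit. Unset Printing Implicit Defensive.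
Import Order.TTheory GRing.Theory Num.Theory.
Local Open Scope ring_scope.
Local Open Scope classical_set_scope.

Definition moment_mx (d : measure_display) (T : measurableType d) (R : realType)
  (rho : {measure set T -> \bar R}) (r : nat) (f : 'I_r -> T -> R) : 'M[R]_r :=
  \matrix_(i, j) Rintegral rho setT (fun x => f i x * f j x).

Definition vec_at (T : Type) (R : nzRingType) (r : nat) (f : 'I_r -> T -> R) (x : T)
  : 'cV[R]_r := \col_i f i x.

(* A is the (principal) matrix square root of M: A is symmetric positive
   semidefinite and A A = M.  (This determines A uniquely.) *)
Definition is_psd_sqrt (R : realType) (r : nat) (A M : 'M[R]_r) : Prop :=
  A^T = A /\ (forall v : 'cV[R]_r, 0 <= (v^T *m A *m v) 0 0) /\ A *m A = M.

Definition koopman (d : measure_display) (T : measurableType d) (R : realType)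
  (rho1 : {measure set T -> \bar R}) (k : T -> T -> R) (g : T -> R) : T -> R :=
  fun x => Rintegral rho1 setT (fun x' => k x x' * g x').

Definition koopman_adj (d : measure_display) (T : measurableType d) (R : realType)
  (rho0 : {measure set T -> \bar R}) (k : T -> T -> R) (f : T -> R) : T -> R :=
  fun x' => Rintegral rho0 setT (fun x => k x x' * f x).

Definition in_L2 (d : measure_display) (T : measurableType d) (R : realType)
  (rho : {measure set T -> \bar R}) (f : T -> R) : Prop :=
  measurable_fun setT f /\ rho.-integrable setT (fun x => ((f x) ^+ 2)%:E).

Definition orthonormal_L2 (d : measure_display) (T : measurableType d) (R : realType)
  (rho : {measure set T -> \bar R}) (r : nat) (f : 'I_r -> T -> R) : Prop :=
  (forall i, in_L2 rho (f i)) /\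
  forall i j, Rintegral rho setT (fun x => f i x * f j x) = (i == j)%:R.

From HB Require Import structures.
From mathcomp Require Import all_boot all_order all_algebra.
From mathcomp Require Import all_classical all_reals all_analysis.
From mathcomp Require Import measurable_realfun.
From mathcomp Require Import ring lra.
Import Order.TTheory GRing.Theory Num.Theory.
Local Open Scope ring_scope.
Local Open Scope classical_set_scope.
Set Implicit Arguments. Unset Strict Implicit.

(* Pairing [k] against the
   orthonormal family [psi0] (and using that M[beta] is invertible) shows that
   alpha = P phi0 and, symmetrically, beta = Q psi0 for matrices with
   P^T Q = Sigma.  Hence M[alpha] = P P^T and M[beta] = Q Q^T, so that
   U := M[alpha]^(-1/2) P and V := M[beta]^(-1/2) Q are orthogonal,
   M[alpha]^(1/2) M[beta]^(1/2) = U P^T Q V^T = U Sigma V^T, and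
   U^T M[alpha]^(-1/2) alpha = U^T U phi0 = phi0: the singular functions given
   by the formula are exactly phi0 and psi0. *)

Definition mx_family (X : Type) (R : nzRingType) (m n : nat) (P : 'M[R]_(m, n))
  (f : 'I_n -> X -> R) : 'I_m -> X -> R :=
  fun i x => (P *m vec_at f x) i 0.

Section MatrixFamilies.
Variables (X : Type) (R : nzRingType).

Lemma mx_familyE m n (P : 'M[R]_(m, n)) (f : 'I_n -> X -> R) i x :
  mx_family P f i x = \sum_j P i j * f j x.
Proof. by rewrite /mx_family mxE; apply: eq_bigr => j _; rewrite mxE. Qed.

Lemma mx_family_left_inverse m n (C : 'M[R]_(n, m)) (P : 'M[R]_(m, n))
    (f : 'I_m -> X -> R) (u : 'I_n -> X -> R) :
  C *m P = 1%:M -> (forall x, vec_at f x = P *m vec_at u x) ->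
  mx_family C f = u.
Proof.
move=> CP fP; apply/funext => i; apply/funext => x.
by rewrite /mx_family fP mulmxA CP mul1mx mxE.
Qed.

End MatrixFamilies.

Section BilinearForms.
Variables (X Y : Type) (R : comNzRingType) (n : nat).
Variables (u : 'I_n -> X -> R) (v : 'I_n -> Y -> R).

Lemma vec_at_dotE x y : ((vec_at u x)^T *m vec_at v y) 0 0 = \sum_i u i x * v i y.
Proof. by rewrite mxE; apply: eq_bigr => i _; rewrite !mxE. Qed.

Lemma vec_at_diag_formE (s : 'I_n -> R) x y :
  ((vec_at u x)^T *m diag_mx (\row_i s i) *m vec_at v y) 0 0 =
  \sum_i s i * u i x * v i y.
Proof.
rewrite mul_mx_diag mxE; apply: eq_bigr => i _; rewrite !mxE; ring.
Qed.

End BilinearForms.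

Section GramMatrix.
Variables (d : measure_display) (T : measurableType d) (R : realType).
Variable rho : {measure set T -> \bar R}.

Lemma Rintegral_sum (I : Type) (s : seq I) (F : I -> T -> R) :
  (forall i, rho.-integrable setT (EFin \o F i)) ->
  \int[rho]_x (\sum_(i <- s) F i x) = \sum_(i <- s) \int[rho]_x F i x.
Proof.
move=> intF; elim: s => [|i s IH].
  by under eq_Rintegral do rewrite big_nil; rewrite big_nil Rintegral_cst ?mul0r.
under eq_Rintegral do rewrite big_cons.
rewrite big_cons RintegralD ?IH //.
have := integrable_sum measurableT s (P := xpredT) (fun i _ => intF i).
by apply: eq_integrable => // x _ /=; rewrite sumEFin.
Qed.

Lemma in_L2_mul_integrable (f g : T -> R) :
  in_L2 rho f -> in_L2 rho g -> rho.-integrable setT (EFin \o (f \* g)).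
Proof.
move=> [mf intf2] [mg intg2].
apply: (le_integrable measurableT _ _ (integrableD measurableT intf2 intg2)).
  by apply/measurable_EFinP; apply: measurable_funM.
move=> x _ /=; rewrite lee_fin normrM [X in _ <= X]ger0_norm ?addr_ge0 ?sqr_ge0 //.
rewrite -(real_normK (num_real (f x))) -(real_normK (num_real (g x))).
have := normr_ge0 (f x); have := normr_ge0 (g x); nra.
Qed.

Lemma in_L2_scale_mul_integrable (c : R) (f g : T -> R) :
  in_L2 rho f -> in_L2 rho g ->
  rho.-integrable setT (EFin \o (fun x => c * f x * g x)).
Proof.
move=> L2f L2g; have := integrableZl measurableT c (in_L2_mul_integrable L2f L2g).
by apply: eq_integrable => // x _ /=; rewrite -EFinM mulrA.
Qed.

Lemma in_L2_mx_family m n (P : 'M[R]_(m, n)) (f : 'I_n -> T -> R) :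
  (forall j, in_L2 rho (f j)) -> forall i, in_L2 rho (mx_family P f i).
Proof.
move=> L2f i; split.
  rewrite (_ : mx_family P f i = fun x => \sum_j P i j * f j x); last first.
    by apply/funext => x; rewrite mx_familyE.
  by apply: measurable_sum => j; apply: measurable_funM => //; case: (L2f j).
have -> : (fun x => (mx_family P f i x ^+ 2)%:E) =
    EFin \o (fun x => \sum_j \sum_k P i j * P i k * f j x * f k x).
  apply/funext => x /=; rewrite mx_familyE expr2 mulr_suml; congr EFin.
  by apply: eq_bigr => j _; rewrite mulr_sumr; apply: eq_bigr => k _; ring.
have intZ j k := in_L2_scale_mul_integrable (P i j * P i k) (L2f j) (L2f k).
have intS j := integrable_sum measurableT (index_enum 'I_n) (P := xpredT) (fun k _ => intZ j k).
have := integrable_sum measurableT (index_enum 'I_n) (P := xpredT) (fun j _ => intS j).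
apply: eq_integrable => // x _ /=; rewrite -sumEFin.
by apply: eq_bigr => j _; rewrite -sumEFin.
Qed.

Definition gram_mx m n (f : 'I_m -> T -> R) (g : 'I_n -> T -> R) : 'M[R]_(m, n) :=
  \matrix_(i, j) \int[rho]_x (f i x * g j x).

Lemma trmx_gram_mx m n (f : 'I_m -> T -> R) (g : 'I_n -> T -> R) :
  (gram_mx f g)^T = gram_mx g f.
Proof.
by apply/matrixP => i j; rewrite !mxE; apply: eq_Rintegral => x _; rewrite mulrC.
Qed.

Lemma gram_mx_familyl m n p (P : 'M[R]_(m, n)) (f : 'I_n -> T -> R)
    (g : 'I_p -> T -> R) :
  (forall j, in_L2 rho (f j)) -> (forall j, in_L2 rho (g j)) ->
  gram_mx (mx_family P f) g = P *m gram_mx f g.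
Proof.
move=> L2f L2g; apply/matrixP => i k; rewrite !mxE.
under eq_Rintegral do rewrite mx_familyE mulr_suml.
rewrite Rintegral_sum => [|j]; last exact: in_L2_scale_mul_integrable.
apply: eq_bigr => j _; rewrite mxE -RintegralZl //; last exact: in_L2_mul_integrable.
by apply: eq_Rintegral => x _; rewrite mulrA.
Qed.

Lemma gram_mx_familyr m n p (Q : 'M[R]_(p, n)) (f : 'I_m -> T -> R)
    (g : 'I_n -> T -> R) :
  (forall j, in_L2 rho (f j)) -> (forall j, in_L2 rho (g j)) ->
  gram_mx f (mx_family Q g) = gram_mx f g *m Q^T.
Proof.
move=> L2f L2g.
by rewrite -trmx_gram_mx gram_mx_familyl // trmx_mul trmx_gram_mx.
Qed.

Lemma factor_through_gram_mx (X : Type) n p (f : 'I_n -> X -> R)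
    (g : 'I_n -> T -> R) (u : 'I_p -> X -> R) (v : 'I_p -> T -> R) (C : 'M[R]_p) :
  (forall j, in_L2 rho (g j)) -> (forall j, in_L2 rho (v j)) ->
  moment_mx rho g \in unitmx ->
  (forall x y, (vec_at f x)^T *m vec_at g y = (vec_at u x)^T *m C *m vec_at v y) ->
  forall x, vec_at f x = (C *m gram_mx v g *m invmx (moment_mx rho g))^T *m vec_at u x.
Proof.
move=> L2g L2v Mg_unit fg_uv x.
have fg_uv_x : mx_family (vec_at f x)^T g = mx_family ((vec_at u x)^T *m C) v.
  by apply/funext => i; apply/funext => y; rewrite /mx_family fg_uv.
have := congr1 (fun h => gram_mx h g) fg_uv_x.
rewrite !gram_mx_familyl // => /(congr1 (mulmx^~ (invmx (moment_mx rho g)))).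
rewrite mulmxK // => /(congr1 trmx); rewrite trmxK => ->.
by rewrite !trmx_mul !trmxK !mulmxA.
Qed.

Section Orthonormal.
Variables (n : nat) (u : 'I_n -> T -> R).
Hypothesis u_orth : orthonormal_L2 rho u.

Lemma gram_mx_orthonormal : gram_mx u u = 1%:M.
Proof. by apply/matrixP => i j; rewrite !mxE u_orth.2. Qed.

Lemma eq_mx_orthonormal m (A B : 'M[R]_(m, n)) :
  (forall x, A *m vec_at u x = B *m vec_at u x) -> A = B.
Proof.
move=> AB; have eAB : mx_family A u = mx_family B u.
  by apply/funext => i; apply/funext => x; rewrite /mx_family AB.
have := congr1 (fun h => gram_mx h u) eAB.
by rewrite !gram_mx_familyl ?gram_mx_orthonormal ?mulmx1 //; case: u_orth.
Qed.

Lemma moment_mx_orthonormal_factor m (P : 'M[R]_(m, n)) (f : 'I_m -> T -> R) :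
  (forall x, vec_at f x = P *m vec_at u x) -> moment_mx rho f = P *m P^T.
Proof.
move=> fP; have -> : f = mx_family P u.
  by apply/funext => i; apply/funext => x; rewrite /mx_family -fP mxE.
have L2u := u_orth.1; change (gram_mx (mx_family P u) (mx_family P u) = P *m P^T).
rewrite gram_mx_familyl ?gram_mx_familyr ?gram_mx_orthonormal ?mul1mx //.
exact: in_L2_mx_family.
Qed.

Lemma Rintegral_orthonormal_coord (c : 'I_n -> R) i :
  \int[rho]_x ((\sum_j c j * u j x) * u i x) = c i.
Proof.
have [L2u u_orthE] := u_orth.
under eq_Rintegral do rewrite mulr_suml.
rewrite Rintegral_sum => [|j]; last exact: in_L2_scale_mul_integrable.
transitivity (\sum_j c j * (j == i)%:R).
  apply: eq_bigr => j _; rewrite -u_orthE -RintegralZl //; last exact: in_L2_mul_integrable.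
  by apply: eq_Rintegral => x _; rewrite mulrA.
by rewrite (bigD1 i) //= eqxx mulr1 big1 ?addr0 // => j /negbTE ->; rewrite mulr0.
Qed.

End Orthonormal.

End GramMatrix.

Lemma eq_bilinear_orthonormal (d0 d1 : measure_display) (T0 : measurableType d0)
    (T1 : measurableType d1) (R : realType) (rho0 : {measure set T0 -> \bar R})
    (rho1 : {measure set T1 -> \bar R}) n (u : 'I_n -> T0 -> R) (v : 'I_n -> T1 -> R)
    (A B : 'M[R]_n) :
  orthonormal_L2 rho0 u -> orthonormal_L2 rho1 v ->
  (forall x y, (vec_at u x)^T *m A *m vec_at v y = (vec_at u x)^T *m B *m vec_at v y) ->
  A = B.
Proof.
move=> u_orth v_orth AB.
have uA x : (vec_at u x)^T *m A = (vec_at u x)^T *m B.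
  by apply: (eq_mx_orthonormal v_orth); apply: AB.
apply: trmx_inj; apply: (eq_mx_orthonormal u_orth) => x.
by have := congr1 trmx (uA x); rewrite !trmx_mul !trmxK.
Qed.

Section KoopmanSVD.
Variables (d : measure_display) (T : measurableType d) (R : realType).
Variables (rho0 rho1 : {measure set T -> \bar R}) (n : nat) (k : T -> T -> R).
Variables (sigma : 'I_n -> R) (phi psi : 'I_n -> T -> R).
Hypothesis k_svd : forall x x', k x x' = \sum_i sigma i * phi i x * psi i x'.

Lemma koopman_adj_svd : orthonormal_L2 rho0 phi ->
  forall i, koopman_adj rho0 k (phi i) = (fun x' => sigma i * psi i x').
Proof.
move=> phi_orth i; apply/funext => x'.
rewrite -[RHS](Rintegral_orthonormal_coord phi_orth (fun j => sigma j * psi j x')).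
by apply: eq_Rintegral => x _; rewrite k_svd; congr (_ * _); apply: eq_bigr => j _; ring.
Qed.

Lemma koopman_svd : orthonormal_L2 rho1 psi ->
  forall i, koopman rho1 k (psi i) = (fun x => sigma i * phi i x).
Proof.
move=> psi_orth i; apply/funext => x.
rewrite -[RHS](Rintegral_orthonormal_coord psi_orth (fun j => sigma j * phi j x)).
by apply: eq_Rintegral => x' _; rewrite k_svd; congr (_ * _); apply: eq_bigr => j _; ring.
Qed.

End KoopmanSVD.

Section SquareRootFactorization.
Variables (R : comUnitRingType) (n : nat).

Lemma invmx_sqrt_mul_orthogonal (A P : 'M[R]_n) :
  A^T = A -> A *m A = P *m P^T -> A \in unitmx ->
  (invmx A *m P)^T *m (invmx A *m P) = 1%:M.
Proof.
move=> A_sym AA A_unit; apply: mulmx1C.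
rewrite trmx_mul trmx_inv A_sym !mulmxA -(mulmxA _ P) -AA.
by rewrite mulmxA mulVmx // mul1mx mulmxV.
Qed.

Lemma sqrt_mulmx_svd (A0 A1 P Q : 'M[R]_n) :
  A0 *m A0 = P *m P^T -> A0 \in unitmx ->
  A1^T = A1 -> A1 *m A1 = Q *m Q^T -> A1 \in unitmx ->
  A0 *m A1 = (invmx A0 *m P) *m (P^T *m Q) *m (invmx A1 *m Q)^T.
Proof.
move=> A0A0 A0_unit A1_sym A1A1 A1_unit.
rewrite trmx_mul trmx_inv A1_sym !mulmxA -(mulmxA _ P) -A0A0 -(mulmxA _ Q) -A1A1.
by rewrite !mulmxA mulVmx // mul1mx mulmxK.
Qed.

End SquareRootFactorization.

Theorem theoremC1 (R : realType) (d : measure_display) (T : measurableType d)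
  (rho0 rho1 : probability T R) (r : nat)
  (k : T -> T -> R) (alpha beta : 'I_r -> T -> R)
  (halpha : forall i, in_L2 rho0 (alpha i))
  (hbeta : forall i, in_L2 rho1 (beta i))
  (hk_fact : forall x x', k x x' = \sum_(i < r) alpha i x * beta i x')
  (sigma : 'I_r -> R) (phi0 psi0 : 'I_r -> T -> R)
  (hphi0 : orthonormal_L2 rho0 phi0) (hpsi0 : orthonormal_L2 rho1 psi0)
  (hk_svd : forall x x', k x x' = \sum_(i < r) sigma i * phi0 i x * psi0 i x')
  (hsigma1 : forall i : 'I_r, val i = 0%N -> sigma i = 1)
  (hsigma_sorted : forall i j : 'I_r, (i <= j)%N -> sigma j <= sigma i)
  (hsigma_ge0 : forall i, 0 <= sigma i)
  (hM0 : moment_mx rho0 alpha \in unitmx) (hM1 : moment_mx rho1 beta \in unitmx)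
  (A0 A1 : 'M[R]_r)
  (hA0 : is_psd_sqrt A0 (moment_mx rho0 alpha))
  (hA1 : is_psd_sqrt A1 (moment_mx rho1 beta)) :
  let Sigma : 'M[R]_r := diag_mx (\row_i sigma i) in
  exists U V : 'M[R]_r,
    U^T *m U = 1%:M /\ V^T *m V = 1%:M /\
    A0 *m A1 = U *m Sigma *m V^T /\
    let phi : 'I_r -> T -> R :=
      fun i x => (U^T *m invmx A0 *m vec_at alpha x) i 0 in
    let psi : 'I_r -> T -> R :=
      fun i x' => (V^T *m invmx A1 *m vec_at beta x') i 0 in
    moment_mx rho0 phi = 1%:M /\
    moment_mx rho1 psi = 1%:M /\
    (forall x x', k x x' = ((vec_at phi x)^T *m Sigma *m vec_at psi x') 0 0) /\
    (forall i, koopman_adj rho0 k (phi i) = (fun x' => sigma i * psi i x')) /\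
    (forall i, koopman rho1 k (psi i) = (fun x => sigma i * phi i x)).
Proof.
move=> Sigma.
have k_alpha_beta x x' : (vec_at alpha x)^T *m vec_at beta x' =
    (vec_at phi0 x)^T *m Sigma *m vec_at psi0 x'.
  by apply/matrixP => i j; rewrite !ord1 vec_at_dotE vec_at_diag_formE -hk_fact -hk_svd.
have k_beta_alpha x' x : (vec_at beta x')^T *m vec_at alpha x =
    (vec_at psi0 x')^T *m Sigma^T *m vec_at phi0 x.
  by rewrite -[LHS]trmxK trmx_mul trmxK k_alpha_beta !trmx_mul trmxK mulmxA.
have alphaP := factor_through_gram_mx hbeta hpsi0.1 hM1 k_alpha_beta.
have betaQ := factor_through_gram_mx halpha hphi0.1 hM0 k_beta_alpha.
set P := _^T in alphaP; set Q := _^T in betaQ.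
have PQ : P^T *m Q = Sigma.
  apply: (eq_bilinear_orthonormal hphi0 hpsi0) => x x'.
  by rewrite -k_alpha_beta alphaP betaQ trmx_mul !mulmxA.
have [A0_sym [_ A0_sq]] := hA0; have [A1_sym [_ A1_sq]] := hA1.
have A0_unit : A0 \in unitmx by move: hM0; rewrite -A0_sq unitmx_mul => /andP[].
have A1_unit : A1 \in unitmx by move: hM1; rewrite -A1_sq unitmx_mul => /andP[].
rewrite (moment_mx_orthonormal_factor hphi0 alphaP) in A0_sq.
rewrite (moment_mx_orthonormal_factor hpsi0 betaQ) in A1_sq.
have U_orth := invmx_sqrt_mul_orthogonal A0_sym A0_sq A0_unit.
have V_orth := invmx_sqrt_mul_orthogonal A1_sym A1_sq A1_unit.
exists (invmx A0 *m P), (invmx A1 *m Q); split=> //; split=> //.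
split; first by rewrite -PQ; apply: sqrt_mulmx_svd.
move=> phi psi.
have -> : phi = phi0 by apply: mx_family_left_inverse alphaP; rewrite -mulmxA.
have -> : psi = psi0 by apply: mx_family_left_inverse betaQ; rewrite -mulmxA.
split; first exact: gram_mx_orthonormal hphi0.
split; first exact: gram_mx_orthonormal hpsi0.
split; first by move=> x x'; rewrite vec_at_diag_formE hk_svd.
by split; [exact: koopman_adj_svd hk_svd hphi0 | exact: koopman_svd hk_svd hpsi0].
Qed.
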